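(* Let $E$ be a normed vector space with induced metric $d$, let $V:E\to E$ be a map, and let $S\subset E$ be closed. Suppose that for each $a\in S$ there exist an open neighborhood $\Omega_a$ of $a$ and $K_a>0$ such that $$\limsup_{h\to0^+}\frac{d(x+hV(x),S)-d(x,S)}{h}\le K_a\,d(x,S)\quad\text{for all }x\in\Omega_a.$$ Then $S$ is positively invariant with respect to $V$: every forward solution $\sigma:[0,\delta)\to E$ of $V$ with $\sigma(0)\in S$ satisfies $\sigma(t)\in S$ for all $t\in[0,\delta)$.
   Context: $d(x,S):=\inf_{y\in S}d(x,y)$. A forward solution of $V$ is a continuous curve $\sigma:[0,\delta)\to E$ ($\delta>0$) such that for every $s\in[0,\delta)$, $\|\sigma(s+h)-\sigma(s)-hV(\sigma(s))\|=o(h)$ as $h\to0^+$, i.e. the right derivative of $\sigma$ at $s$ exists and equals $V(\sigma(s))$. *)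

From HB Require Import structures.
From mathcomp Require Import all_boot all_order all_algebra.
From mathcomp Require Import all_classical all_reals all_analysis.
Set Implicit Arguments. Unset Strict Implicit. Unset Printing Implicit Defensive.
Import Order.TTheory GRing.Theory Num.Theory.
Import numFieldNormedType.Exports.
Local Open Scope classical_set_scope.
Local Open Scope ring_scope.

Definition dist_set (R : realType) (E : normedModType R) (x : E) (S : set E) : R :=
  inf [set `|x - y| | y in S].

Definition forward_solution (R : realType) (E : normedModType R)
    (V : E -> E) (delta : R) (sigma : R -> E) : Prop :=
  0 < delta /\
  {within `[0, delta[, continuous sigma} /\
  forall s, 0 <= s < delta ->
    (fun h : R => h^-1 * `|sigma (s + h) - sigma s - h *: V (sigma s)|)
      @ 0^'+ --> (0 : R).

From HB Require Import structures.
From mathcomp Require Import all_boot all_order all_algebra.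
From mathcomp Require Import all_classical all_reals all_analysis.
From mathcomp Require Import ring lra.
Set Implicit Arguments. Unset Strict Implicit. Unset Printing Implicit Defensive.
Import Order.TTheory GRing.Theory Num.Theory.
Import numFieldNormedType.Exports.
Local Open Scope classical_set_scope.
Local Open Scope ring_scope.

(* Let g(t) = d(sigma t, S).  By real induction on [0, t] it suffices to show
   that membership in S passes to left limits (S is closed) and persists a
   little to the right of any time s with sigma s in S.  For the latter, let M
   be the supremum of g on a short interval [s, s + eta] inside Omega.  The
   Lipschitz bound on d(., S), the derivative of sigma and the limsup
   hypothesis bound the upper right Dini derivative of g by K M + eps, so a
   Dini monotonicity argument gives g <= (K M + eps) eta on that interval.
   Hence M <= K eta M, and M = 0 as soon as K eta < 1. *)

Section DistSet.
Variables (R : realType) (E : normedModType R).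
Implicit Types (x y : E) (S : set E).

Lemma has_lbound_dist x S : has_lbound [set `|x - y| | y in S].
Proof. by exists 0 => _ [y _ <-]. Qed.

Lemma dist_set_ge0 x S : 0 <= dist_set x S.
Proof.
rewrite /dist_set; have [->|/set0P[y Sy]] := eqVneq S set0.
  by rewrite image_set0 inf0.
by apply: lb_le_inf; [exists `|x - y|; exists y | move=> _ [z _ <-]].
Qed.

Lemma dist_set_le x y S : S y -> dist_set x S <= `|x - y|.
Proof. by move=> Sy; apply: ge_inf; [exact: has_lbound_dist | exists y]. Qed.

Lemma dist_set_lipschitz x y S :
  S !=set0 -> dist_set x S <= dist_set y S + `|x - y|.
Proof.
move=> [z0 Sz0]; rewrite -lerBlDr /dist_set; apply: lb_le_inf.
  by exists `|y - z0|; exists z0.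
move=> _ [z Sz <-]; rewrite lerBlDr -/(dist_set x S).
apply: (le_trans (dist_set_le x Sz)).
have -> : x - z = (x - y) + (y - z) by rewrite addrA subrK.
by rewrite addrC ler_normD.
Qed.

Lemma dist_set_mem x S : S x -> dist_set x S = 0.
Proof.
move=> Sx; apply/eqP; rewrite eq_le dist_set_ge0 andbT.
by rewrite -(normr0 E) -(subrr x) dist_set_le.
Qed.

Lemma dist_set_le0 x S : closed S -> S !=set0 -> dist_set x S <= 0 -> S x.
Proof.
move=> cS [y0 Sy0] d0; apply: cS => B /nbhs_ballP [e /= e0 eB].
have hinf : has_inf [set `|x - y| | y in S].
  by split; [exists `|x - y0|; exists y0 | exact: has_lbound_dist].
have [_ [z Sz <-]] := inf_adherent e0 hinf; rewrite -/(dist_set x S) => xz.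
exists z; split => //; apply: eB; rewrite -ball_normE /=.
by apply: lt_le_trans xz _; rewrite gerDr.
Qed.

End DistSet.

Section RealLine.
Variable R : realType.
Implicit Types (a b c d e s t u h : R).

Lemma near_right0 (P : R -> Prop) : (\forall h \near 0^'+, P h) ->
  exists2 d, 0 < d & forall h, 0 < h < d -> P h.
Proof.
move=> /nbhs_ballP [d /= d0 Hd]; exists d => // h /andP[h0 hd]; apply: Hd => //.
by rewrite /ball /= sub0r normrN gtr0_norm.
Qed.

Lemma cvg_right0_lt (F : R -> R) e :
  (fun h : R => h^-1 * F h) @ 0^'+ --> (0 : R) -> 0 < e ->
  exists2 d, 0 < d & forall h, 0 < h < d -> F h < e * h.
Proof.
move=> /fcvgrPdist_lt /(_ e) H e0; have [d d0 Hd] := near_right0 (H e0).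
exists d => // h /andP[h0 hd]; have := Hd h; rewrite h0 hd => /(_ erefl) /=.
rewrite sub0r normrN => /(le_lt_trans (ler_norm _)).
by rewrite -ltr_pdivrMr // mulrC.
Qed.

Lemma limf_esup_lt_near (f : R -> R) c c' :
  (limf_esup (fun h => (f h)%:E) 0^'+ <= c%:E)%E -> c < c' ->
  exists2 d, 0 < d & forall h, 0 < h < d -> f h < c'.
Proof.
move=> H cc'; have : (limf_esup (fun h => (f h)%:E) 0^'+ < c'%:E)%E.
  by apply: le_lt_trans H _; rewrite lte_fin.
move=> /ereal_inf_lt [_ [A FA <-] hA]; apply: near_right0.
apply: filterS FA => h Ah; rewrite -lte_fin; apply: le_lt_trans hA.
by apply: ereal_sup_ubound; exists h.
Qed.

Lemma within_continuous_ball (E : normedModType R) (f : R -> E) a s e :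
  {within `[0, a[, continuous f} -> 0 <= s < a -> 0 < e ->
  exists2 d, 0 < d &
    forall u, 0 <= u < a -> `|s - u| < d -> `|f s - f u| < e.
Proof.
move=> /subspace_continuousP hc hs e0.
have := hc s; rewrite /= in_itv /= hs => /(_ erefl).
move=> /fcvgrPdist_lt /(_ e e0) /nbhs_ballP [d /= d0 Hd].
exists d => // u hu su; apply: (Hd u); first by rewrite /ball /=.
by rewrite /= in_itv /= hu.
Qed.

Lemma real_induction a b (P : R -> Prop) : a <= b ->
  (forall s, a <= s <= b -> (forall u, a <= u < s -> P u) -> P s) ->
  (forall s, a <= s < b -> (forall u, a <= u <= s -> P u) ->
    exists2 e, 0 < e & forall u, s < u < s + e -> P u) ->
  forall u, a <= u <= b -> P u.
Proof.
move=> ab Hleft Hright.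
pose A := [set s | a <= s <= b /\ forall u, a <= u <= s -> P u].
have Aa : A a.
  split=> [|u /andP[au ua]]; first by rewrite lexx ab.
  have -> : u = a by apply/eqP; rewrite eq_le ua au.
  by apply: Hleft => [|v /andP[av]]; [rewrite lexx ab | rewrite ltNge av].
have hA : has_sup A by split; [exists a | exists b => x [/andP[_ ->]]].
set m := sup A.
have am : a <= m by exact: sup_upper_bound.
have mb : m <= b by apply: ge_sup; [exists a | move=> x [/andP[_ ->]]].
have below u : a <= u < m -> P u.
  move=> /andP[au um]; have um0 : 0 < m - u by rewrite subr_gt0.
  have [x [/andP[_ xb] Ax] ux] := sup_adherent um0 hA.
  by apply: Ax; rewrite au /=; move: ux; rewrite opprB addrC subrK => /ltW.
have Am : forall u, a <= u <= m -> P u.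
  move=> u /andP[au]; rewrite le_eqVlt => /orP[/eqP -> | um].
    by apply: Hleft; [rewrite am mb | exact: below].
  by apply: below; rewrite au um.
have [mb'|bm] := ltP m b; last first.
  by move=> u /andP[au ub]; apply: Am; rewrite au (le_trans ub bm).
have [e e0 He] := Hright m (introT andP (conj am mb')) Am.
pose k := Num.min e (b - m).
have k0 : 0 < k by rewrite lt_min e0 subr_gt0.
have ke : k <= e by rewrite ge_min lexx.
have kb : k <= b - m by rewrite ge_min lexx orbT.
have : A (m + k / 2).
  split=> [|u /andP[au hu]]; first by apply/andP; split; lra.
  have [um|mu] := leP u m; first by apply: Am; rewrite au um.
  by apply: He; apply/andP; split; lra.
move=> /(sup_upper_bound hA); rewrite -/m; lra.
Qed.

Lemma dini_nonincreasing (g : R -> R) a b : a <= b ->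
  (forall s, a < s <= b -> forall e, 0 < e -> exists2 d, 0 < d &
     forall u, a <= u < s -> s - u < d -> g s - g u < e) ->
  (forall s, a <= s < b ->
     exists2 d, 0 < d & forall h, 0 < h < d -> g (s + h) <= g s) ->
  forall u, a <= u <= b -> g u <= g a.
Proof.
move=> ab Husc Hstep; apply: real_induction => // s /andP[ha sb] IH.
  have [->|sa] := eqVneq s a; first by [].
  have {sa}ha' : a < s by rewrite lt_neqAle eq_sym sa.
  rewrite leNgt; apply/negP => gas; have gsa : 0 < g s - g a by rewrite subr_gt0.
  have [d d0 Hd] := Husc s (introT andP (conj ha' sb)) _ gsa.
  pose k := Num.min d (s - a).
  have k0 : 0 < k by rewrite lt_min d0 subr_gt0.
  have kd : k <= d by rewrite ge_min lexx.
  have ks : k <= s - a by rewrite ge_min lexx orbT.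
  have hk : a <= s - k / 2 < s by apply/andP; split; lra.
  have := Hd _ hk; have := IH _ hk; lra.
have [d d0 Hd] := Hstep s (introT andP (conj ha sb)).
exists d => // u /andP[su ud]; have := Hd (u - s); rewrite subrKC => h.
apply: le_trans (h _) (IH _ _); first by apply/andP; split; lra.
by rewrite lexx ha.
Qed.

End RealLine.

Section DistanceAlongSolution.
Variables (R : realType) (E : normedModType R) (V : E -> E) (S : set E).
Variables (delta : R) (sigma : R -> E).
Hypothesis S_neq0 : S !=set0.
Hypothesis sigma_cont : {within `[0, delta[, continuous sigma}.
Hypothesis sigma_deriv : forall s, 0 <= s < delta ->
  (fun h : R => h^-1 * `|sigma (s + h) - sigma s - h *: V (sigma s)|)
    @ 0^'+ --> (0 : R).

Implicit Types (c d e eta s t u v h : R).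

Local Notation g u := (dist_set (sigma u) S).

Local Notation dini_bound K x :=
  (limf_esup (fun h : R => ((dist_set (x + h *: V x) S - dist_set x S) / h)%:E)
     0^'+ <= (K * dist_set x S)%:E)%E.

Lemma dist_solution_usc s e : 0 <= s < delta -> 0 < e -> exists2 d, 0 < d &
  forall u, 0 <= u < delta -> `|s - u| < d -> g s - g u < e.
Proof.
move=> hs e0; have [d d0 Hd] := within_continuous_ball sigma_cont hs e0.
exists d => // u hu su; rewrite ltrBlDl.
apply: le_lt_trans (dist_set_lipschitz (sigma s) (sigma u) S_neq0) _.
by rewrite ltrD2l Hd.
Qed.

Lemma dist_solution_right_step s (K eps : R) : 0 <= s < delta ->
  dini_bound K (sigma s) -> 0 < eps ->
  exists2 d, 0 < d & forall h, 0 < h < d -> g (s + h) <= g s + (K * g s + eps) * h.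
Proof.
move=> hs HK eps0; have eps2 : 0 < eps / 2 by lra.
have Kg_lt : K * g s < K * g s + eps / 2 by rewrite ltrDl.
have [d1 d10 Hd1] := limf_esup_lt_near HK Kg_lt.
have [d2 d20 Hd2] := cvg_right0_lt (sigma_deriv hs) eps2.
exists (Num.min d1 d2); first by rewrite lt_min d10 d20.
move=> h /andP[h0]; rewrite lt_min => /andP[hd1 hd2].
have := Hd1 h; rewrite h0 hd1 => /(_ erefl); rewrite ltr_pdivrMr // => hV.
have := Hd2 h; rewrite h0 hd2 => /(_ erefl) => hsig.
have := dist_set_lipschitz (sigma (s + h)) (sigma s + h *: V (sigma s)) S_neq0.
rewrite opprD addrA mulrDl; lra.
Qed.

Lemma dist_solution_slope s eta (K M : R) c :
  0 <= s -> 0 <= eta -> s + eta < delta -> 0 <= K ->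
  (forall u, s <= u <= s + eta -> dini_bound K (sigma u) /\ g u <= M) ->
  K * M < c -> forall u, s <= u <= s + eta -> g u - c * u <= g s - c * s.
Proof.
move=> s0 eta0 sd K0 Hint cKM.
have c0 : 0 <= c.
  have [_ gsM] := Hint s ltac:(apply/andP; split; lra).
  apply/ltW/le_lt_trans/cKM/mulr_ge0 => //.
  exact: le_trans (dist_set_ge0 _ _) gsM.
apply: dini_nonincreasing => [|t /andP[st tb] e e0|t /andP[st tb]]; first lra.
- have td : 0 <= t < delta by apply/andP; split; lra.
  have [d d0 Hd] := dist_solution_usc td e0.
  exists d => // u /andP[su ut] hd.
  have ud : 0 <= u < delta by apply/andP; split; lra.
  have := Hd u ud; rewrite ger0_norm; last lra.
  move=> /(_ hd); have : 0 <= c * (t - u) by apply: mulr_ge0; lra.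
  rewrite mulrBr; lra.
- have td : 0 <= t < delta by apply/andP; split; lra.
  have [Ht gtM] := Hint t ltac:(apply/andP; split; lra).
  have cKM0 : 0 < c - K * M by rewrite subr_gt0.
  have [d d0 Hd] := dist_solution_right_step td Ht cKM0.
  exists d => // h /andP[h0 hd]; have := Hd h; rewrite h0 hd => /(_ erefl).
  have : K * g t * h <= K * M * h by rewrite ler_pM2r // ler_wpM2l.
  rewrite mulrDr; lra.
Qed.

Lemma solution_near_start s (Om : set E) : 0 <= s < delta -> open Om ->
  Om (sigma s) -> exists2 eta, 0 < eta & forall u, s <= u <= s + eta ->
    u < delta /\ Om (sigma u) /\ `|sigma s - sigma u| < 1.
Proof.
move=> hs oOm Oms; have /nbhs_ballP[r /= r0 Hr] : nbhs (sigma s) Om.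
  exact: open_nbhs_nbhs.
have r1 : 0 < Num.min r 1 by rewrite lt_min r0 ltr01.
have [d d0 Hd] := within_continuous_ball sigma_cont hs r1.
pose eta := Num.min (d / 2) ((delta - s) / 2).
have eta_d : eta <= d / 2 by rewrite ge_min lexx.
have eta_delta : eta <= (delta - s) / 2 by rewrite ge_min lexx orbT.
exists eta => [|u /andP[su ue]]; first by rewrite lt_min; lra.
have hu : 0 <= u < delta by apply/andP; split; lra.
have := Hd u hu; rewrite ler0_norm; last lra.
move=> /(_ ltac:(lra)); rewrite lt_min => /andP[hr h1].
by do !split => //; [lra | apply: Hr; rewrite -ball_normE].
Qed.

Lemma dist_solution_sup_le0 s eta (K B : R) :
  0 <= s -> 0 < eta -> s + eta < delta -> 0 < K -> K * eta <= 1 / 2 ->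
  S (sigma s) ->
  (forall u, s <= u <= s + eta -> dini_bound K (sigma u) /\ g u <= B) ->
  forall u, s <= u <= s + eta -> g u <= 0.
Proof.
move=> s0 eta0 sd K0 Keta Ss Hint.
have Is : s <= s <= s + eta by apply/andP; lra.
pose A := [set g u | u in [set u | s <= u <= s + eta]].
have hA : has_sup A.
  split; first by exists (g s); exists s.
  by exists B => _ [u hu <-]; have [] := Hint u hu.
pose M := sup A.
have gM u : s <= u <= s + eta -> g u <= M.
  by move=> hu; apply: sup_upper_bound => //; exists u.
have M0 : 0 <= M by rewrite -(dist_set_mem Ss); exact: gM.
have Hslope v : s <= v <= s + eta -> dini_bound K (sigma v) /\ g v <= M.
  by move=> hv; split; [have [] := Hint v hv | exact: gM].
have M_le eps : 0 < eps -> M <= (K * M + eps) * eta.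
  move=> eps0; apply: ge_sup; first by exists (g s); exists s.
  move=> _ [u /[dup] hu /andP[su ue] <-].
  have cKM : K * M < K * M + eps by rewrite ltrDl.
  have := dist_solution_slope s0 (ltW eta0) sd (ltW K0) Hslope cKM hu.
  have : (K * M + eps) * (u - s) <= (K * M + eps) * eta.
    apply: ler_wpM2l; last lra.
    exact: addr_ge0 (mulr_ge0 (ltW K0) M0) (ltW eps0).
  rewrite (dist_set_mem Ss) !mulrBr; lra.
have M_le0 : M <= 0.
  rewrite leNgt; apply/negP => Mp.
  have eta4 : 0 < 4 * eta by rewrite mulr_gt0.
  have := M_le _ (divr_gt0 Mp eta4).
  have -> : (K * M + M / (4 * eta)) * eta = M * (K * eta) + M / 4 by field; lra.
  have : M * (K * eta) <= M * (1 / 2) by apply: ler_wpM2l.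
  lra.
by move=> u hu; apply: le_trans (gM u hu) M_le0.
Qed.

Lemma solution_local_invariance s (Om : set E) (K : R) : 0 <= s < delta ->
  S (sigma s) -> open Om -> Om (sigma s) -> 0 < K ->
  (forall x, Om x -> dini_bound K x) ->
  exists2 eta, 0 < eta & forall u, s <= u <= s + eta -> g u <= 0.
Proof.
move=> hs Ss oOm Oms K0 HK; have s0 : 0 <= s by case/andP: hs.
have [eta0 eta00 Hnear] := solution_near_start hs oOm Oms.
pose eta := Num.min eta0 (1 / (2 * K)).
have etap : 0 < eta by rewrite lt_min eta00 divr_gt0 // mulr_gt0.
have eta_eta0 : eta <= eta0 by rewrite ge_min lexx.
have Keta : K * eta <= 1 / 2.
  have : eta <= 1 / (2 * K) by rewrite ge_min lexx orbT.
  by rewrite ler_pdivlMr ?mulr_gt0 // => h; rewrite ler_pdivlMr //; lra.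
have Hint u : s <= u <= s + eta ->
    [/\ u < delta, dini_bound K (sigma u) & g u <= 1].
  move=> /andP[su ue]; have [ud [Omu su1]] := Hnear u ltac:(apply/andP; lra).
  split; [by [] | exact: HK |].
  by apply: le_trans (ltW su1); rewrite distrC dist_set_le.
have sed : s + eta < delta by have [] := Hint (s + eta) ltac:(apply/andP; lra).
exists eta => //; apply: (@dist_solution_sup_le0 _ _ _ 1 s0 etap sed K0 Keta Ss).
by move=> u hu; have [_ ? ?] := Hint u hu.
Qed.

Lemma solution_mem_left s : closed S -> 0 < s < delta ->
  (forall u, 0 <= u < s -> S (sigma u)) -> S (sigma s).
Proof.
move=> cS /andP[s0 sd] Hbelow; apply: dist_set_le0 => //.
rewrite leNgt; apply/negP => gs.
have hs : 0 <= s < delta by apply/andP; split; lra.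
have [d d0 Hd] := within_continuous_ball sigma_cont hs gs.
pose k := Num.min d s.
have k0 : 0 < k by rewrite lt_min d0 s0.
have kd : k <= d by rewrite ge_min lexx.
have ks : k <= s by rewrite ge_min lexx orbT.
have hu : 0 <= s - k / 2 < s by apply/andP; split; lra.
have hu' : 0 <= s - k / 2 < delta by apply/andP; split; lra.
have hk : `|s - (s - k / 2)| < d by rewrite opprB addrC subrK ger0_norm; lra.
by have := Hd _ hu' hk; rewrite ltNge (dist_set_le _ (Hbelow _ hu)).
Qed.

End DistanceAlongSolution.

Theorem theorem6p6 (R : realType) (E : normedModType R) (V : E -> E) (S : set E) :
  closed S ->
  (forall a, S a -> exists (Omega : set E) (K : R),
     open Omega /\ Omega a /\ 0 < K /\
     forall x, Omega x ->
       (limf_esup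
          (fun h : R => ((dist_set (x + h *: V x) S - dist_set x S) / h)%:E)
          0^'+ <= (K * dist_set x S)%:E)%E) ->
  forall (delta : R) (sigma : R -> E),
    forward_solution V delta sigma -> S (sigma 0) ->
    forall t, 0 <= t < delta -> S (sigma t).
Proof.
move=> cS Hloc delta sigma [_ [hcont hder]] S0 t /andP[t0 td].
have Sne : S !=set0 by exists (sigma 0).
apply: (@real_induction R 0 t (fun u => S (sigma u))); rewrite ?lexx ?t0 //.
- move=> s /andP[s0 st] IH; have [<- //|sn0] := eqVneq 0 s.
  apply: solution_mem_left Sne hcont _ cS _ IH.
  by rewrite lt_neqAle sn0 s0 /=; lra.
- move=> s /andP[s0 st] IH; have Ss : S (sigma s) by apply: IH; rewrite s0 lexx.
  have [Om [K [oOm [Oms [K0 HK]]]]] := Hloc _ Ss.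
  have hs : 0 <= s < delta by apply/andP; split; lra.
  have [eta eta0 Heta] := solution_local_invariance Sne hcont hder hs Ss oOm Oms K0 HK.
  exists eta => // u /andP[su ue]; apply: dist_set_le0 cS Sne _.
  by apply: Heta; apply/andP; split; lra.
Qed.
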